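(* For all integers $r\ge 3$ and $n\ge 2$, $$m_0(1,\underbrace{n,\dots,n}_{r})=n^{r-1}-(n-1)^{r-1}+n-1.$$
   Context: For integers $n_1\ge\dots\ge n_r$, let $X_\ell=[n_\ell]=\{1,\dots,n_\ell\}$. An $r$-partite $r$-graph is a family $\mathcal F\subseteq X_1\times\dots\times X_r$; its vertices are the pairs $(\ell,x)$ with $x\in X_\ell$, and an edge $A=(a_1,\dots,a_r)$ contains the vertex $(\ell,x)$ iff $a_\ell=x$. Two edges $A,B$ are disjoint if $A[\ell]\ne B[\ell]$ for all $\ell$ (where $A[\ell]$ is the $\ell$-th coordinate). The matching number $\nu(\mathcal F)$ is the maximum number of pairwise disjoint edges of $\mathcal F$. A transversal is a set $T$ of vertices such that every edge of $\mathcal F$ contains a vertex of $T$; $\tau(\mathcal F)$ is the minimum size of a transversal. For integers $r\ge 3$ and $n_1\ge\dots\ge n_r>s\ge 1$, $m_0(s,n_1,\dots,n_r)$ denotes the maximum of $|\mathcal F|$ over all $\mathcal F\subseteq X_1\times\dots\times X_r$ with $\nu(\mathcal F)\le s<\tau(\mathcal F)$. *)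

From mathcomp Require Import all_boot all_order.
Set Implicit Arguments. Unset Strict Implicit. Unset Printing Implicit Defensive.

(* r-partite r-graphs on X_1 x ... x X_r, with X_l = [n_l] encoded as 'I_(ns l)
   (the element i : 'I_(ns l) stands for i+1 in [n_l]). *)
Section Rpartite.
Variables (r : nat) (ns : 'I_r -> nat).

Definition edge := {dffun forall l : 'I_r, 'I_(ns l)}.
Definition vertex := {l : 'I_r & 'I_(ns l)}.

Definition vertex_of (A : edge) (l : 'I_r) : vertex := Tagged (fun l => 'I_(ns l)) (A l).

Definition disjoint_edges (A B : edge) : bool := [forall l, A l != B l].

Definition is_matching (M : {set edge}) : bool :=
  [forall A in M, forall B in M, (A != B) ==> disjoint_edges A B].

Definition nu (F : {set edge}) : nat :=
  \max_(M : {set edge} | (M \subset F) && is_matching M) #|M|.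

Definition is_transversal (F : {set edge}) (T : {set vertex}) : bool :=
  [forall A in F, exists l, vertex_of A l \in T].

(* covering number: minimum size of a transversal (the set of all vertices
   is always a transversal, so the minimum exists) *)
Definition tau (F : {set edge}) : nat :=
  \big[minn/#|[set: vertex]|]_(T : {set vertex} | is_transversal F T) #|T|.

Definition m0 (s : nat) : nat :=
  \max_(F : {set edge} | (nu F <= s) && (s < tau F)) #|F|.
End Rpartite.

From Pilot Require Import Defs.
From mathcomp Require Import all_boot all_order.
From mathcomp Require Import zify.
Set Implicit Arguments. Unset Strict Implicit. Unset Printing Implicit Defensive.

(* Edges are vectors of [n]^m, and two edges intersect iff the vectors agree in
   some coordinate; nu F <= 1 says that F is intersecting, and tau F > 1 that no
   coordinate is constant on F ("nonstar").
   The main tool is a cross-intersecting bound: nonempty cross-intersecting P, Q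
   in [n]^m satisfy |P| + |Q| <= n^m - (n-1)^m + 1, by induction on m, slicing
   along one coordinate.
   For intersecting nonstar F in [n]^(m+1), project away the first coordinate.
   Call b heavy if (x, b) is in F for at least two x; then
   |F| <= (n-1) |heavy| + |shadow|, and every heavy vector meets every vector of
   the shadow. If nothing is heavy, the shadow is covered by two
   cross-intersecting families. If all heavy vectors share a coordinate value,
   the cross-intersecting bound applies slice by slice. Otherwise the heavy
   vectors together with the shadow vectors starting with a fixed z form an
   intersecting nonstar family one dimension lower, and induction on the
   dimension closes the argument, starting from the fact that there is no
   intersecting nonstar family in [n]^2.
   The bound is attained by the vectors (x0, b) with b meeting (x1, ..., x1),
   together with the n - 1 vectors (x, x1, ..., x1), x <> x0. *)

Section Hitting.
Variable n : nat.
Hypothesis n_gt1 : 1 < n.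

Definition hitting k := n ^ k - n.-1 ^ k.

Lemma predn_exp_le k : n.-1 ^ k <= n ^ k.
Proof. by case: k => // k; rewrite leq_exp2r // leq_pred. Qed.

Lemma hitting_add k : hitting k + n.-1 ^ k = n ^ k.
Proof. by rewrite subnK // predn_exp_le. Qed.

Lemma hittingS k : hitting k.+1 = n.-1 * hitting k + n ^ k.
Proof.
have := hitting_add k; have := hitting_add k.+1; rewrite !expnS.
have : n = n.-1.+1 by rewrite prednK // ltnW.
nia.
Qed.

Lemma expn_le_hitting k : n ^ k <= n.-1 * hitting k + 1.
Proof.
elim: k => [|k IH]; first by rewrite /hitting !expn0 subnn muln0.
rewrite hittingS expnS.
have : 0 < n ^ k by rewrite expn_gt0 ltnW.
have : n = n.-1.+1 by rewrite prednK // ltnW.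
nia.
Qed.

Lemma hitting_bound_step m : 1 < m -> n * (hitting m + n.-1) <= hitting m.+1 + n.-1.
Proof.
move=> m_gt1; rewrite hittingS.
have := hitting_add m; have : n.-1 ^ 2 <= n.-1 ^ m by rewrite leq_pexp2l // -subn1 subn_gt0.
have : n = n.-1.+1 by rewrite prednK // ltnW.
rewrite expnS expn1; nia.
Qed.

End Hitting.

Section Vectors.
Variable n : nat.
Local Notation vec m := {ffun 'I_m -> 'I_n}.

Definition meets m (a b : vec m) : bool := [exists i, a i == b i].

Definition ins_at m (l : 'I_m.+1) (x : 'I_n) (b : vec m) : vec m.+1 :=
  [ffun i => if unlift l i is Some j then b j else x].

Definition del_at m (l : 'I_m.+1) (a : vec m.+1) : vec m := [ffun j => a (lift l j)].

Definition slice m (l : 'I_m.+1) (x : 'I_n) (S : {set vec m.+1}) : {set vec m} :=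
  [set b | ins_at l x b \in S].

Lemma meetsC m (a b : vec m) : meets a b = meets b a.
Proof. by apply/existsP/existsP => -[i /eqP e]; exists i; rewrite e. Qed.

Lemma meets_refl m (a : vec m.+1) : meets a a.
Proof. by apply/existsP; exists ord0. Qed.

Lemma ins_at_id m l x (b : vec m) : ins_at l x b l = x.
Proof. by rewrite ffunE unlift_none. Qed.

Lemma ins_at_lift m l x (b : vec m) j : ins_at l x b (lift l j) = b j.
Proof. by rewrite ffunE liftK. Qed.

Lemma ins_atK m l x : cancel (@ins_at m l x) (del_at l).
Proof. by move=> b; apply/ffunP => j; rewrite ffunE ins_at_lift. Qed.

Lemma del_atK m l (a : vec m.+1) : ins_at l (a l) (del_at l a) = a.
Proof.
apply/ffunP => i; case: (unliftP l i) => [j ->|->]; last by rewrite ins_at_id.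
by rewrite ins_at_lift ffunE.
Qed.

Lemma meets_ins_at m l x y (a b : vec m) :
  meets (ins_at l x a) (ins_at l y b) = (x == y) || meets a b.
Proof.
apply/existsP/orP => [[i]|[e|/existsP[j e]]].
- case: (unliftP l i) => [j ->|->]; rewrite ?ins_at_lift ?ins_at_id => e; last by left.
  by right; apply/existsP; exists j.
- by exists l; rewrite !ins_at_id.
- by exists (lift l j); rewrite !ins_at_lift.
Qed.

Lemma meets_del_at m l (a b : vec m.+1) :
  meets a b = (a l == b l) || meets (del_at l a) (del_at l b).
Proof. by rewrite -(meets_ins_at l) !del_atK. Qed.

Lemma mem_slice m l x (S : {set vec m.+1}) b : (b \in slice l x S) = (ins_at l x b \in S).
Proof. by rewrite inE. Qed.

Lemma card_slice m l x (S : {set vec m.+1}) :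
  #|slice l x S| = #|[set a in S | a l == x]|.
Proof.
have -> : [set a in S | a l == x] = ins_at l x @: slice l x S.
  apply/setP => a; rewrite inE; apply/andP/imsetP => [[aS /eqP <-]|[b bS ->]].
    by exists (del_at l a); rewrite ?mem_slice del_atK.
  by rewrite -mem_slice ins_at_id.
by rewrite card_imset //; apply: can_inj (@ins_atK m l x).
Qed.

Lemma card_fibers m (i : 'I_m) (S : {set vec m}) :
  #|S| = \sum_(x : 'I_n) #|[set a in S | a i == x]|.
Proof.
rewrite -sum1_card (partition_big (fun a : vec m => a i) xpredT) //=.
by apply: eq_bigr => x _; rewrite -sum1_card; apply: eq_bigl => a; rewrite inE.
Qed.

Lemma card_slices m l (S : {set vec m.+1}) : #|S| = \sum_x #|slice l x S|.
Proof. by rewrite (card_fibers l); apply: eq_bigr => x _; rewrite card_slice. Qed.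

Lemma card_vec_le m (S : {set vec m}) : #|S| <= n ^ m.
Proof. by apply: leq_trans (max_card _) _; rewrite card_ffun !card_ord. Qed.

Lemma card_le_slicesD1 m l v (S : {set vec m.+1}) :
  #|S| <= n ^ m + \sum_(x | x != v) #|slice l x S|.
Proof. by rewrite (card_slices l) (bigD1 v) // leq_add2r card_vec_le. Qed.

Definition const_at m (l : 'I_m) (x : 'I_n) (S : {set vec m}) :=
  {in S, forall a : vec m, a l = x}.

Definition nonconst_at m (l : 'I_m) (S : {set vec m}) :=
  forall x, exists2 a, a \in S & a l != x.

Definition nonstar m (S : {set vec m}) := forall l, nonconst_at l S.

Lemma nonconst_atP m l (S : {set vec m}) :
  reflect (nonconst_at l S) [forall x, [exists a in S, a l != x]].
Proof.
apply: (iffP forallP) => [Sl x | Sl x]; first by have /exists_inP[a] := Sl x; exists a.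
by have [a aS ax] := Sl x; apply/exists_inP; exists a.
Qed.

Lemma const_atVnonconst_at m l (S : {set vec m}) :
  (exists x, const_at l x S) \/ nonconst_at l S.
Proof.
case: (boolP [forall x, [exists a in S, a l != x]]) => [/nonconst_atP|]; first by right.
rewrite negb_forall => /existsP[x]; rewrite negb_exists_in => /forall_inP Sx.
by left; exists x => a /Sx /negPn /eqP.
Qed.

Lemma const_atVnonstar m (S : {set vec m}) : (exists l x, const_at l x S) \/ nonstar S.
Proof.
case: (boolP [forall l, [forall x, [exists a in S, a l != x]]]) => [/forallP Sns|].
  by right => l; apply/nonconst_atP.
rewrite negb_forall => /existsP[l /nonconst_atP Snc]; left.
by have [[x Sx]|//] := const_atVnonconst_at l S; exists l, x.
Qed.

Lemma slice_neq0 m l a (S : {set vec m.+1}) : a \in S -> slice l (a l) S != set0.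
Proof. by move=> aS; apply/set0Pn; exists (del_at l a); rewrite mem_slice del_atK. Qed.

Lemma card_slice_const m l x (S : {set vec m.+1}) :
  const_at l x S -> #|S| = #|slice l x S|.
Proof.
move=> Sx; rewrite card_slice; apply: eq_card => a; rewrite inE.
by case aS: (a \in S); rewrite //= Sx ?eqxx.
Qed.

Definition fiber m (S : {set vec m.+1}) (b : vec m) := [set x | ins_at ord0 x b \in S].
Definition heavy m (S : {set vec m.+1}) := [set b | 1 < #|fiber S b|].
Definition shadow m (S : {set vec m.+1}) := [set b | fiber S b != set0].

Lemma card_fibers_sum m (S : {set vec m.+1}) : #|S| = \sum_b #|fiber S b|.
Proof.
rewrite (card_slices ord0); under eq_bigr => x _ do rewrite -sum1_card.
rewrite (exchange_big_dep xpredT) //=; apply: eq_bigr => b _.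
by rewrite -sum1_card; apply: eq_bigl => x; rewrite mem_slice inE.
Qed.

Lemma card_le_heavy_shadow m (S : {set vec m.+1}) :
  #|S| <= n.-1 * #|heavy S| + #|shadow S|.
Proof.
have cardE (A : {set vec m}) : #|A| = \sum_b (b \in A).
  by rewrite -sum1_card big_mkcond; apply: eq_bigr => b _; case: (b \in A).
rewrite card_fibers_sum !cardE big_distrr -big_split /=.
apply: leq_sum => b _; rewrite !inE -card_gt0.
have := max_card (fiber S b); rewrite card_ord.
by case: #|fiber S b| => [|[|y]] /=; lia.
Qed.

Lemma heavy_sub_shadow m (S : {set vec m.+1}) : heavy S \subset shadow S.
Proof. by apply/subsetP => b; rewrite !inE -card_gt0; apply: ltnW. Qed.

Lemma mem_shadow m (S : {set vec m.+1}) a : a \in S -> del_at ord0 a \in shadow S.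
Proof. by move=> aS; rewrite inE; apply/set0Pn; exists (a ord0); rewrite inE del_atK. Qed.

End Vectors.

Lemma ordS_neq n (z : 'I_n) : 1 < n -> ordS z != z.
Proof.
move=> n_gt1; apply/eqP => /(congr1 val) /=.
case: (ltngtP z.+1 n) (ltn_ord z) => [lt|//|eq] _.
  by rewrite modn_small //; lia.
by rewrite eq modnn; lia.
Qed.

Section CrossIntersecting.
Variable n : nat.
Local Notation vec m := {ffun 'I_m -> 'I_n}.

Definition cross_intersecting m (P Q : {set vec m}) :=
  forall a b, a \in P -> b \in Q -> meets a b.

Lemma cross_intersectingC m (P Q : {set vec m}) :
  cross_intersecting P Q -> cross_intersecting Q P.
Proof. by move=> PQ a b aQ bP; rewrite meetsC PQ. Qed.

Lemma cross_intersecting_slice m (P Q : {set vec m.+1}) l z w :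
  cross_intersecting P Q -> z != w -> cross_intersecting (slice l z P) (slice l w Q).
Proof.
move=> PQ zw a b; rewrite !mem_slice => aP bQ.
by have := PQ _ _ aP bQ; rewrite meets_ins_at (negbTE zw).
Qed.

Section SlicePair.
Variables (m : nat) (l : 'I_m.+1).
Hypothesis IH : forall P Q : {set vec m}, P != set0 -> Q != set0 ->
  cross_intersecting P Q -> #|P| + #|Q| <= (hitting n m).+1.

Lemma card_slice_pair (P Q : {set vec m.+1}) z w :
  cross_intersecting P Q -> z != w ->
  (exists2 a, a \in P & a l != w) -> (exists2 b, b \in Q & b l != z) ->
  #|slice l z P| + #|slice l w Q| <= (hitting n m).+1.
Proof.
move=> PQ zw [a aP aw] [b bQ]; rewrite eq_sym => zb.
have IHs z' w' : z' != w' -> slice l z' P != set0 -> slice l w' Q != set0 ->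
    #|slice l z' P| + #|slice l w' Q| <= (hitting n m).+1.
  by move=> zw' Pz Qw; apply: IH => //; apply: cross_intersecting_slice.
have Pa := slice_neq0 l aP; have Qb := slice_neq0 l bQ.
case: (eqVneq (slice l z P) set0) => [->|Pz];
  case: (eqVneq (slice l w Q) set0) => [->|Qw]; rewrite ?cards0.
- by [].
- by have := IHs _ _ aw Pa Qw; lia.
- by have := IHs _ _ zb Pz Qb; lia.
- exact: IHs.
Qed.

End SlicePair.

Hypothesis n_gt1 : 1 < n.

Lemma card_cross_intersecting1 (P Q : {set vec 1}) :
  P != set0 -> Q != set0 -> cross_intersecting P Q -> #|P| + #|Q| <= (hitting n 1).+1.
Proof.
move=> /set0Pn[a aP] /set0Pn[b bQ] PQ.
have meets_eq (p q : vec 1) : meets p q -> p = q.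
  by case/existsP => i /eqP e; apply/ffunP => j; rewrite (ord1 j) -(ord1 i).
have /subset_leq_card : P \subset [set b].
  by apply/subsetP => p pP; rewrite inE (meets_eq _ _ (PQ _ _ pP bQ)).
have /subset_leq_card : Q \subset [set a].
  by apply/subsetP => q qQ; rewrite inE (meets_eq _ _ (PQ _ _ aP qQ)).
by have := hitting_add n 1; rewrite !cards1 !expn1; lia.
Qed.

Section Step.
Variable k : nat.
Hypothesis IH : forall P Q : {set vec k.+1}, P != set0 -> Q != set0 ->
  cross_intersecting P Q -> #|P| + #|Q| <= (hitting n k.+1).+1.

Lemma card_cross_const (P Q : {set vec k.+2}) z0 :
  Q != set0 -> cross_intersecting P Q -> const_at ord0 z0 Q ->
  #|P| + #|Q| <= (hitting n k.+2).+1.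
Proof.
move=> Q0 PQ Qz0; have /set0Pn[b bQ] := Q0; have bz0 : b ord0 = z0 := Qz0 b bQ.
have : 0 < #|Q| by rewrite card_gt0.
have : 0 < n.-1 by rewrite -subn1 subn_gt0.
rewrite (card_slice_const Qz0) (hittingS n_gt1); have := card_vec_le (slice ord0 z0 Q).
case: (const_atVnonconst_at ord0 P) => [[z1 Pz1] | Pnc].
  rewrite (card_slice_const Pz1); have := card_vec_le (slice ord0 z1 P).
  have := expn_le_hitting n_gt1 k.+1; lia.
have pair z : z != z0 -> #|slice ord0 z P| + #|slice ord0 z0 Q| <= (hitting n k.+1).+1.
  by move=> zz0; apply: (card_slice_pair IH PQ zz0 (Pnc z0)); exists b; rewrite // bz0 eq_sym.
have := card_le_slicesD1 ord0 z0 P.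
have : \sum_(z | z != z0) (#|slice ord0 z P| + #|slice ord0 z0 Q|)
         <= \sum_(z | z != z0) (hitting n k.+1).+1 by apply: leq_sum.
rewrite big_split /= !sum_nat_const cardC1 card_ord; nia.
Qed.

Lemma card_cross_nonconst (P Q : {set vec k.+2}) :
  cross_intersecting P Q -> nonconst_at ord0 P -> nonconst_at ord0 Q ->
  #|P| + #|Q| <= (hitting n k.+2).+1.
Proof.
move=> PQ Pnc Qnc.
(* pair slice z of P with slice z + 1 (mod n) of Q *)
have pair z : #|slice ord0 z P| + #|slice ord0 (ordS z) Q| <= (hitting n k.+1).+1.
  by apply: (card_slice_pair IH PQ _ (Pnc _) (Qnc _)); rewrite eq_sym ordS_neq.
have : #|P| + #|Q| <= n * (hitting n k.+1).+1.
  rewrite (card_slices ord0 Q) (reindex_inj (@ordS_inj n)) (card_slices ord0 P) -big_split /=.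
  by rewrite -[n in n * _]card_ord -sum_nat_const; apply: leq_sum => z _; apply: pair.
have : n.-1 ^ 1 <= n.-1 ^ k.+1 by rewrite leq_pexp2l // -subn1 subn_gt0.
have : n = n.-1.+1 by rewrite prednK // ltnW.
have := hitting_add n k.+1; rewrite (hittingS n_gt1 k.+1) expn1; nia.
Qed.

Lemma card_cross_step (P Q : {set vec k.+2}) :
  P != set0 -> Q != set0 -> cross_intersecting P Q -> #|P| + #|Q| <= (hitting n k.+2).+1.
Proof.
move=> P0 Q0 PQ.
case: (const_atVnonconst_at ord0 Q) => [[z Qz] | Qnc]; first exact: card_cross_const Qz.
case: (const_atVnonconst_at ord0 P) => [[z Pz] | Pnc]; last exact: card_cross_nonconst.
by rewrite addnC; apply: card_cross_const Pz => //; apply: cross_intersectingC.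
Qed.

End Step.

Lemma card_cross_intersecting m (P Q : {set vec m}) :
  P != set0 -> Q != set0 -> cross_intersecting P Q -> #|P| + #|Q| <= (hitting n m).+1.
Proof.
case: m P Q => [|m] P Q.
  by move=> /set0Pn[a aP] /set0Pn[b bQ] /(_ a b aP bQ) /existsP[[]].
elim: m P Q => [|m IH] P Q; [exact: card_cross_intersecting1 | exact: card_cross_step].
Qed.

End CrossIntersecting.

Section IntersectingFamilies.
Variable n : nat.
Hypothesis n_gt1 : 1 < n.
Local Notation vec m := {ffun 'I_m -> 'I_n}.

Definition intersecting m (F : {set vec m}) := cross_intersecting F F.

Lemma meets2 (a b : vec 2) : meets a b = (a ord0 == b ord0) || (a ord_max == b ord_max).
Proof.
apply/existsP/orP => [[i e]|[e|e]]; [|by exists ord0|by exists ord_max].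
have [i0|i1] : i = ord0 \/ i = ord_max.
  by case: i {e} => -[|[|]] // ?; [left|right]; apply: val_inj.
- by left; rewrite -i0.
- by right; rewrite -i1.
Qed.

Lemma intersecting_nonstar_dim2 (F : {set vec 2}) : intersecting F -> nonstar F -> F = set0.
Proof.
move=> Fint Fns; apply/eqP/set0Pn => -[a aF].
have [b bF ba] := Fns ord0 (a ord0); have [c cF ca] := Fns ord_max (a ord_max).
have := Fint _ _ bF aF; have := Fint _ _ cF aF; have := Fint _ _ cF bF.
rewrite !meets2 (negbTE ba) (negbTE ca) orbF /= => cb /eqP ca0 /eqP ba1.
by move: cb; rewrite ca0 ba1 eq_sym (negbTE ba) (negbTE ca).
Qed.

Lemma heavy_meets_shadow m (F : {set vec m.+1}) :
  intersecting F -> cross_intersecting (heavy F) (shadow F).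
Proof.
move=> Fint h b; rewrite !inE => /card_gt1P[x1 [x2 [hx1 hx2 x12]]] /set0Pn[y hy].
move: hx1 hx2 hy; rewrite !inE => hx1 hx2 hy.
have [x xy hx] : exists2 x, x != y & ins_at ord0 x h \in F.
  by case: (eqVneq x1 y) => [e|]; [exists x2; rewrite // -e eq_sym | exists x1].
by have := Fint _ _ hx hy; rewrite meets_ins_at (negbTE xy).
Qed.

Lemma card_shadow_le m (F : {set vec m.+2}) a :
  intersecting F -> nonconst_at ord0 F -> a \in F -> #|shadow F| <= (hitting n m.+1).+1.
Proof.
move=> Fint Fnc aF; set P := slice ord0 (a ord0) F.
set Q := \bigcup_(y | y != a ord0) slice ord0 y F.
have PQ : cross_intersecting P Q.
  move=> p q pP /bigcupP[y ya qQ].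
  by apply: cross_intersecting_slice pP qQ; rewrite // eq_sym.
have Q0 : Q != set0.
  have [a' a'F a'a] := Fnc (a ord0); have /set0Pn[q qQ] := slice_neq0 ord0 a'F.
  by apply/set0Pn; exists q; apply/bigcupP; exists (a' ord0).
have /subset_leq_card UPQ : shadow F \subset P :|: Q.
  apply/subsetP => b; rewrite inE => /set0Pn[y]; rewrite inE in_setU => yb.
  case: (eqVneq y (a ord0)) => [ya|ya]; first by rewrite mem_slice -ya yb.
  by apply/orP; right; apply/bigcupP; exists y; rewrite ?mem_slice.
apply: leq_trans UPQ (leq_trans (leq_card_setU P Q) _).
exact (card_cross_intersecting n_gt1 (slice_neq0 ord0 aF) Q0 PQ).
Qed.

Lemma card_heavy_shadow_const m (F : {set vec m.+2}) l v :
  intersecting F -> nonstar F -> heavy F != set0 -> const_at l v (heavy F) ->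
  n.-1 * #|heavy F| + #|shadow F| <= hitting n m.+1 + n.-1.
Proof.
move=> Fint Fns /set0Pn[h hH] Hv; have hv : h l = v := Hv h hH.
have [a aF al] := Fns (lift ord0 l) v.
have pair w : w != v -> #|slice l v (heavy F)| + #|slice l w (shadow F)| <= (hitting n m).+1.
  move=> wv; apply: (card_slice_pair (card_cross_intersecting n_gt1 (m:=m))).
  - exact: heavy_meets_shadow.
  - by rewrite eq_sym.
  - by exists h; rewrite // hv eq_sym.
  - by exists (del_at ord0 a); rewrite ?mem_shadow // ffunE.
rewrite (card_slice_const Hv) (hittingS n_gt1).
apply: leq_trans (leq_add (leqnn _) (card_le_slicesD1 l v (shadow F))) _.
have : \sum_(w | w != v) (#|slice l v (heavy F)| + #|slice l w (shadow F)|)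
         <= \sum_(w | w != v) (hitting n m).+1 by apply: leq_sum.
rewrite big_split /= !sum_nat_const cardC1 card_ord; nia.
Qed.

Lemma card_heavy_shadow_nonstar m B (F : {set vec m.+2}) :
  (forall G : {set vec m.+1}, intersecting G -> nonstar G -> #|G| <= B) ->
  intersecting F -> nonstar (heavy F) -> n.-1 * #|heavy F| + #|shadow F| <= n * B.
Proof.
move=> IH Fint Hns; have HU := heavy_meets_shadow Fint.
have /subsetP sHU := heavy_sub_shadow F.
pose C z := [set b in shadow F :\: heavy F | b ord0 == z].
have HC z : #|heavy F| + #|C z| <= B.
  have memC b : b \in C z -> b \in shadow F /\ b ord0 = z.
    by rewrite [b \in C z]in_set in_setD => /andP[/andP[_ bU] /eqP].
  have HC0 : heavy F :&: C z = set0.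
    apply/setP => b; rewrite in_setI in_set0 [b \in C z]in_set in_setD.
    by case: (b \in heavy F); rewrite ?andbF.
  rewrite -cardsUI HC0 cards0 addn0; apply: IH => [a b|l x].
    rewrite !in_setU => /orP[aH|/memC[aU az]] /orP[bH|/memC[bU bz]].
    - exact: HU aH (sHU _ bH).
    - exact: HU.
    - by rewrite meetsC; apply: HU.
    - by apply/existsP; exists ord0; rewrite az bz.
  by have [h hH hl] := Hns l x; exists h; rewrite // in_setU hH.
have : \sum_z (#|heavy F| + #|C z|) <= \sum_(z : 'I_n) B by apply: leq_sum => z _.
rewrite big_split /= -card_fibers !sum_nat_const card_ord.
rewrite -(cardsID (heavy F) (shadow F)) (setIidPr (heavy_sub_shadow F)).
by rewrite addnA -mulSnr prednK // ltnW.
Qed.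

Lemma card_intersecting_nonstar_step m B (F : {set vec m.+2}) :
  (forall G : {set vec m.+1}, intersecting G -> nonstar G -> #|G| <= B) ->
  n * B <= hitting n m.+1 + n.-1 ->
  intersecting F -> nonstar F -> #|F| <= hitting n m.+1 + n.-1.
Proof.
move=> IH nB Fint Fns; apply: leq_trans (card_le_heavy_shadow F) _.
case: (eqVneq (heavy F) set0) => [H0|H0].
  have [a aF _] := Fns ord0 (Ordinal (ltnW n_gt1)).
  rewrite H0 cards0 muln0 add0n; apply: leq_trans (card_shadow_le Fint (Fns ord0) aF) _.
  by rewrite -addn1 leq_add2l -subn1 subn_gt0.
case: (const_atVnonstar (heavy F)) => [[l [v Hv]] | Hns].
  exact: card_heavy_shadow_const Hv.
exact: leq_trans (card_heavy_shadow_nonstar IH Fint Hns) nB.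
Qed.

Lemma card_intersecting_nonstar m (F : {set vec m.+3}) :
  intersecting F -> nonstar F -> #|F| <= hitting n m.+2 + n.-1.
Proof.
elim: m F => [|m IH] F.
  apply: (card_intersecting_nonstar_step (B := 0)); last by rewrite muln0.
  by move=> G Gint Gns; rewrite (intersecting_nonstar_dim2 Gint Gns) cards0.
by apply: card_intersecting_nonstar_step IH _; apply: hitting_bound_step.
Qed.

End IntersectingFamilies.

Section Extremal.
Variable n : nat.
Hypothesis n_gt1 : 1 < n.
Local Notation vec m := {ffun 'I_m -> 'I_n}.

Let x0 : 'I_n := Ordinal (ltnW n_gt1).
Let x1 : 'I_n := Ordinal n_gt1.

Definition ones m : vec m := [ffun => x1].

Definition extremal m : {set vec m.+1} :=
  [set a : vec m.+1 | if a ord0 == x0 then meets (del_at ord0 a) (ones m)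
                      else del_at ord0 a == ones m].

Lemma slice_extremal m x :
  slice ord0 x (extremal m) = if x == x0 then [set b | meets b (ones m)] else [set ones m].
Proof. by apply/setP => b; rewrite mem_slice inE ins_at_id ins_atK; case: eqP; rewrite inE. Qed.

Lemma card_meets_ones m : #|[set b : vec m | meets b (ones m)]| = hitting n m.
Proof.
have -> : [set b : vec m | meets b (ones m)] = ~: [set b in ffun_on (predC1 x1)].
  apply/setP => b; rewrite inE in_setC inE -[meets _ _]negbK /meets negb_exists.
  by congr (~~ _); apply/forallP/ffun_onP => bx1 i; have := bx1 i; rewrite !inE ffunE.
by rewrite cardsCs setCK cardsE card_ffun_on cardC1 card_ffun !card_ord.
Qed.

Lemma card_extremal m : #|extremal m| = hitting n m + n.-1.
Proof.
rewrite (card_slices ord0) (bigD1 x0) //= slice_extremal eqxx card_meets_ones.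
have -> : n.-1 = \sum_(x | x != x0) 1 by rewrite sum1_card cardC1 card_ord.
by congr (_ + _); apply: eq_bigr => x xx0; rewrite slice_extremal (negbTE xx0) cards1.
Qed.

Lemma intersecting_extremal m : intersecting (extremal m.+1).
Proof.
move=> a b; rewrite !inE (meets_del_at ord0 a b).
case: (eqVneq (a ord0) x0) => [-> aP|_ /eqP->];
  case: (eqVneq (b ord0) x0) => [_ bP|_ /eqP->].
- by [].
- by rewrite aP orbT.
- by rewrite meetsC bP orbT.
- by rewrite meets_refl orbT.
Qed.

Lemma ins_ones_extremal m y : ins_at ord0 y (ones m.+1) \in extremal m.+1.
Proof. by rewrite -mem_slice slice_extremal; case: eqP; rewrite !inE ?meets_refl. Qed.

Lemma nonstar_extremal m : nonstar (extremal m.+2).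
Proof.
move=> l x; case: (unliftP ord0 l) => [j ->|->]; last first.
  by exists (ins_at ord0 (ordS x) (ones m.+2)); rewrite ?ins_ones_extremal ?ins_at_id ?ordS_neq.
case: (eqVneq x x1) => [->|xx1]; last first.
  by exists (ins_at ord0 x0 (ones m.+2)); rewrite ?ins_ones_extremal // ins_at_lift ffunE eq_sym.
pose b : vec m.+2 := [ffun i => if i == j then x0 else x1].
exists (ins_at ord0 x0 b); last by rewrite ins_at_lift ffunE eqxx.
rewrite -mem_slice slice_extremal eqxx inE; apply/existsP; exists (lift j ord0).
by rewrite !ffunE [lift j ord0 == j]eq_sym (negbTE (neq_lift j ord0)).
Qed.

End Extremal.

(* With all parts of size n, [edge ns] is convertible to [vec], so a family of
   edges can be read as a set of vectors. *)
Section Hypergraph.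
Variables r n : nat.
Local Notation ns := (fun _ : 'I_r.+1 => n).
Local Notation vec := {ffun 'I_r.+1 -> 'I_n}.

Lemma disjoint_edgesE (A B : edge ns) : disjoint_edges A B = ~~ meets (A : vec) (B : vec).
Proof. by rewrite /disjoint_edges /meets negb_exists. Qed.

Lemma nu_le1E (F : {set edge ns}) : nu F <= 1 <-> intersecting (F : {set vec}).
Proof.
split => [nuF a b aF bF | Fint].
  case: (eqVneq a b) => [<-|ab]; first exact: meets_refl.
  apply: contraT => ab_disj; suff : #|[set a; b]| <= nu F by rewrite cards2 ab; lia.
  apply: leq_bigmax_cond; rewrite subUset !sub1set aF bF /=.
  apply/forall_inP => x /set2P[]-> ; apply/forall_inP => y /set2P[]->; apply/implyP;
    by rewrite ?eqxx // disjoint_edgesE ?(meetsC b a).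
apply/bigmax_leqP => M /andP[/subsetP MF /forall_inP Mm].
rewrite leqNgt; apply/card_gt1P => -[A [B [AM BM AB]]].
move: (Mm A AM) => /forall_inP /(_ B BM) /implyP /(_ AB).
by rewrite disjoint_edgesE Fint ?MF.
Qed.

Lemma vertex_of_inj (a b : edge ns) l l' :
  vertex_of a l = vertex_of b l' -> l = l' /\ a l = b l'.
Proof.
move=> e; have ll' : l = l' := congr1 tag e; subst l'; split=> //.
by move/eqP: e; rewrite eq_Tagged => /eqP.
Qed.

Lemma tau_le_transversal (F : {set edge ns}) T : Defs.is_transversal F T -> tau F <= #|T|.
Proof.
move=> T_tr; rewrite /tau.
exact: (Order.TotalTheory.bigmin_le_cond #|[set: vertex ns]| (fun T : {set vertex ns} => #|T|) T_tr).
Qed.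

Lemma tau_gt1E (F : {set edge ns}) : 1 < n -> 1 < tau F <-> nonstar (F : {set vec}).
Proof.
move=> n_gt1; pose vx l (x : 'I_n) : vertex ns := existT _ l x.
split => [tau_gt1 l | Fns].
  case: (const_atVnonconst_at l (F : {set vec})) => [[x Fx]|//].
  suff /tau_le_transversal : Defs.is_transversal F [set vx l x] by rewrite cards1; lia.
  by apply/forall_inP => a aF; apply/existsP; exists l; rewrite inE /vertex_of Fx.
apply: (big_ind (fun k => 1 < k)) => [|k k'|T /forall_inP Ttr].
- apply/card_gt1P; exists (vx ord0 (Ordinal (ltnW n_gt1))), (vx ord0 (Ordinal n_gt1)).
  by rewrite !inE eq_Tagged.
- by rewrite leq_min => ->.
rewrite ltnNge; apply/negP => /card_le1P T1.
have [a aF _] := Fns ord0 (Ordinal (ltnW n_gt1)); have /existsP[l aT] := Ttr a aF.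
have [b bF] := Fns l (a l); have /existsP[l' bT] := Ttr b bF.
have := T1 _ aT (vertex_of b l'); rewrite bT inE => /esym /eqP /vertex_of_inj[<- ->].
by rewrite eqxx.
Qed.

End Hypergraph.

Theorem theorem1p1 (r n : nat) : 3 <= r -> 2 <= n ->
  m0 (fun _ : 'I_r => n) 1 = n ^ r.-1 - (n.-1) ^ r.-1 + n.-1.
Proof.
case: r => [|[|[|m]]] // _ n_gt1; apply/eqP; rewrite eqn_leq; apply/andP; split.
  apply/bigmax_leqP => F /andP[/nu_le1E Fint /(tau_gt1E _ n_gt1) Fns].
  exact (card_intersecting_nonstar n_gt1 Fint Fns).
rewrite -(card_extremal n_gt1 m.+2); apply: leq_bigmax_cond; apply/andP; split.
  exact/nu_le1E/intersecting_extremal.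
exact/(tau_gt1E _ n_gt1)/nonstar_extremal.
Qed.
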